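(* Let $E=(E^0,E^1,r,s)$ be a graph with no cycles and no line points. Then for any vertex $v\in E^0$ and any infinite path $\alpha=f_1f_2\cdots$ in $E$ there exists a finite path $\mu=e_1\cdots e_n$ (with $n\ge1$) such that $s(e_1)=v$ and $e_n\neq f_i$ for all $i\in\mathbb{N}$.
   Context: A graph $E=(E^0,E^1,r,s)$ has vertex set $E^0$, edge set $E^1$, range and source maps. A finite path of positive length is $e_1\cdots e_n$ with $r(e_i)=s(e_{i+1})$; an infinite path is $f_1f_2\cdots$ with $r(f_i)=s(f_{i+1})$. A cycle is a finite path $e_1\cdots e_n$ ($n\ge1$) with $s(e_1)=r(e_n)$. For $v\in E^0$, $T(v)$ is the set of vertices $w$ such that there is a path from $v$ to $w$ (including $v$). A bifurcation vertex is one emitting at least two edges. $v$ is a line point if $T(v)$ contains no bifurcation vertex and no vertex of $T(v)$ lies on a cycle (in particular, every sink is a line point). *)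

(* A (directed) graph E = (E^0, E^1, r, s) is given by a vertex
   type V, an edge type Ed, and range/source maps r s : Ed -> V.  No finiteness
   or countability assumptions. *)
From Stdlib Require Import List.
Import ListNotations.
Set Implicit Arguments.

Section Graphs.
Variables (V Ed : Type) (r s : Ed -> V).

Fixpoint chain (e : Ed) (p : list Ed) : Prop :=
  match p with
  | nil => True
  | e' :: p' => r e = s e' /\ chain e' p'
  end.

(* A finite path of positive length is e :: p with [chain e p];
   its source is [s e] and its range is [r (last p e)]. *)

Definition is_cycle (e : Ed) (p : list Ed) : Prop :=
  chain e p /\ s e = r (last p e).

Definition acyclic : Prop := forall e p, ~ is_cycle e p.

(* Infinite path f_1 f_2 ... (indexed from 0). *)
Definition inf_path (f : nat -> Ed) : Prop := forall i, r (f i) = s (f (S i)).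

Definition in_T (v w : V) : Prop :=
  v = w \/ exists e p, chain e p /\ s e = v /\ r (last p e) = w.

Definition bifurcation (w : V) : Prop :=
  exists e1 e2, e1 <> e2 /\ s e1 = w /\ s e2 = w.

Definition on_cycle (w : V) : Prop :=
  exists e p, is_cycle e p /\ In w (map s (e :: p)).

Definition line_point (v : V) : Prop :=
  forall w, in_T v w -> ~ bifurcation w /\ ~ on_cycle w.

Definition no_line_points : Prop := forall v, ~ line_point v.

End Graphs.

(* Without cycles and line points, T(v) contains a bifurcation vertex w.
   In an acyclic graph an infinite path leaves each vertex at most once,
   since the segment between two departures from the same vertex would be a
   cycle; so one of the two edges emitted by w is not on the path, and a path
   from v to w followed by that edge is the required finite path. *)
From Stdlib Require Import List.
From Stdlib Require Import Arith Classical Lia.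
Import ListNotations.

Lemma last_cons_default {A : Type} (a d : A) (l : list A) :
  last (a :: l) d = last l a.
Proof.
  revert a d; induction l as [|b l IH]; intros a d; [reflexivity|].
  change (last (b :: l) d = last (b :: l) a); now rewrite !IH.
Qed.

Section AcyclicGraphs.
Context {V Ed : Type} {r s : Ed -> V}.

Lemma chain_snoc (e x : Ed) (p : list Ed) :
  chain r s e p -> r (last p e) = s x -> chain r s e (p ++ [x]).
Proof.
  revert e; induction p as [|a p IH]; intros e Hc Hx.
  - now split.
  - rewrite last_cons_default in Hx; destruct Hc as [Hea Hc].
    split; [exact Hea | exact (IH a Hc Hx)].
Qed.

Lemma in_T_path_to_edge (v w : V) (x : Ed) :
  in_T r s v w -> s x = w ->
  exists e p, chain r s e p /\ s e = v /\ last p e = x.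
Proof.
  intros [<- | (e & p & Hc & He & Hw)] Hx.
  - now exists x, [].
  - exists e, (p ++ [x]); repeat split.
    + apply chain_snoc; congruence.
    + exact He.
    + apply last_last.
Qed.

Lemma exists_bifurcation_in_T (v : V) :
  acyclic r s -> ~ line_point r s v ->
  exists w, in_T r s v w /\ bifurcation s w.
Proof.
  intros Hac Hv; apply NNPP; intros Hnone; apply Hv; intros w Hvw; split.
  - intros Hw; apply Hnone; now exists w.
  - intros (e & p & Hcyc & _); exact (Hac e p Hcyc).
Qed.

Lemma inf_path_segment_chain (f : nat -> Ed) :
  inf_path r s f -> forall k i, chain r s (f i) (map f (seq (S i) k)).
Proof.
  intros Hf k; induction k as [|k IH]; intros i; simpl.
  - exact I.
  - split; [apply Hf | apply IH].
Qed.

Lemma last_inf_path_segment (f : nat -> Ed) (i k : nat) :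
  last (map f (seq (S i) k)) (f i) = f (i + k).
Proof.
  destruct k as [|k].
  - now rewrite Nat.add_0_r.
  - rewrite seq_S, map_app; cbn [map]; rewrite last_last; f_equal; lia.
Qed.

Lemma acyclic_inf_path_source_inj (f : nat -> Ed) (i j : nat) :
  acyclic r s -> inf_path r s f -> s (f i) = s (f j) -> i = j.
Proof.
  intros Hac Hf.
  assert (Hno_return : forall i k, s (f i) <> s (f (S (i + k)))).
  { intros i' k Hs; apply (Hac (f i') (map f (seq (S i') k))); split.
    - apply inf_path_segment_chain, Hf.
    - rewrite last_inf_path_segment, Hf; exact Hs. }
  intros Hs; destruct (Nat.lt_trichotomy i j) as [Hij | [Hij | Hij]].
  - exfalso; apply (Hno_return i (j - S i)); now replace (S (i + (j - S i))) with j by lia.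
  - exact Hij.
  - exfalso; apply (Hno_return j (i - S j)); now replace (S (j + (i - S j))) with i by lia.
Qed.

Lemma bifurcation_edge_off_inf_path (f : nat -> Ed) (w : V) :
  acyclic r s -> inf_path r s f -> bifurcation s w ->
  exists x, s x = w /\ forall i, x <> f i.
Proof.
  intros Hac Hf (e1 & e2 & Hne & Hs1 & Hs2).
  destruct (classic (exists i, e1 = f i)) as [[i Hi] | Hoff1];
    [| exists e1; split; [exact Hs1 | intros i Hi; apply Hoff1; now exists i]].
  destruct (classic (exists j, e2 = f j)) as [[j Hj] | Hoff2];
    [| exists e2; split; [exact Hs2 | intros j Hj; apply Hoff2; now exists j]].
  exfalso; apply Hne.
  assert (Hij : i = j) by (apply (acyclic_inf_path_source_inj f i j Hac Hf); congruence).
  congruence.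
Qed.

End AcyclicGraphs.

Theorem lemma4p6 (V Ed : Type) (r s : Ed -> V) :
  acyclic r s -> no_line_points r s ->
  forall (v : V) (f : nat -> Ed), inf_path r s f ->
  exists (e : Ed) (p : list Ed),
    chain r s e p /\ s e = v /\ forall i : nat, last p e <> f i.
Proof.
  intros Hac Hnl v f Hf.
  destruct (exists_bifurcation_in_T v Hac (Hnl v)) as (w & Hvw & Hw).
  destruct (bifurcation_edge_off_inf_path f w Hac Hf Hw) as (x & Hx & Hoff).
  destruct (in_T_path_to_edge v w x Hvw Hx) as (e & p & Hc & He & Hl).
  exists e, p; repeat split; [exact Hc | exact He |].
  rewrite Hl; exact Hoff.
Qed.
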